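(* Let $G$ be a group of isometries of the rooted tree $\mathcal T=X^*$. Then the set of pre-layered subgroups of $G$ is closed under intersections and under taking the subgroup generated by two of them (so forms a lattice), and for every word $w$ in a free group, if $H\le G$ is pre-layered then the verbal subgroup $w(H)$ is pre-layered.
   Context: $X$ is a finite alphabet with $|X|\ge2$ and $\mathcal T=X^*$ the associated rooted regular tree. For $x\in X$ and an isometry $g$, $x*g$ denotes the isometry acting as $g$ on the subtree below $x$ (i.e. $(xw)^{x*g}=xw^g$) and fixing all other vertices. A subgroup $H$ is pre-layered if $x*H\le H$ for all $x\in X$. For a word $w(X_1,\dots,X_n)$, $w(H)$ is the subgroup generated by all values $w(h_1,\dots,h_n)$, $h_i\in H$. *)

From mathcomp Require Import all_boot.
Set Implicit Arguments. Unset Strict Implicit. Unset Printing Implicit Defensive.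

Section Tree.
Variable X : finType.

Definition vert := seq X.
Definition map_t := vert -> vert.
Definition isoset := map_t -> Prop.

Definition is_isom (g : map_t) : Prop :=
  bijective g /\ g [::] = [::] /\
  (forall (w : vert) (x : X), exists y : X, g (rcons w x) = rcons (g w) y).

(* right action convention: w^(g h) = (w^g)^h *)
Definition gmul (g h : map_t) : map_t := fun w => h (g w).
Definition gone : map_t := fun w => w.

Definition is_group (H : isoset) : Prop :=
  [/\ H gone,
      (forall g, H g -> is_isom g),
      (forall g h, H g -> H h -> H (gmul g h)) &
      (forall g, H g -> exists h, [/\ H h, gmul g h = gone & gmul h g = gone])].

(* x * g : acts as g below x, fixes everything else *)
Definition lcomp (x : X) (g : map_t) : map_t :=
  fun v => match v with
           | y :: w => if y == x then x :: g w else v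
           | [::] => [::]
           end.

Definition prelayered (G H : isoset) : Prop :=
  [/\ is_group H, (forall g, H g -> G g) &
      (forall (x : X) g, H g -> H (lcomp x g))].

Definition gen (S : isoset) : isoset :=
  fun g => forall K : isoset, is_group K -> (forall h, S h -> K h) -> K g.

Inductive word : Type :=
| WVar of nat
| WOne
| WMul of word & word
| WInv of word.

(* wval w f g : g is the value of w at the assignment X_i := f i *)
Fixpoint wval (w : word) (f : nat -> map_t) (g : map_t) : Prop :=
  match w with
  | WVar i => g = f i
  | WOne => g = gone
  | WMul u v => exists a b, [/\ wval u f a, wval v f b & g = gmul a b]
  | WInv u => exists a, [/\ wval u f a, gmul a g = gone & gmul g a = gone]
  end.

Definition verbal (w : word) (H : isoset) : isoset :=
  gen (fun g => exists f : nat -> map_t, (forall i, H (f i)) /\ wval w f g).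

End Tree.

From mathcomp Require Import all_boot.
From Stdlib Require Import FunctionalExtensionality.

Set Implicit Arguments.
Unset Strict Implicit.
Unset Printing Implicit Defensive.

(* Each [lcomp x] is a monoid endomorphism of the maps of the tree, so for
   groups [G] and [K] the preimage [{g in G | x * g in K}] is again a group.
   Hence the subgroup generated by a subset [S] of [G] that is stable under
   every [lcomp x] is itself stable: it lies in each such preimage.  This
   gives the join [<H, K>] and the verbal subgroup [w(H)], since
   [x * w(h_1, ..., h_n) = w(x * h_1, ..., x * h_n)]; intersections are
   immediate. *)

Section PrelayeredLattice.
Variable X : finType.
Implicit Types (g h : map_t X) (S G H K : isoset X).
Local Notation gone := (@gone X).

Lemma gmul_inv_uniq g h h' : gmul h g = gone -> gmul g h' = gone -> h = h'.
Proof.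
move=> hg gh'; apply: functional_extensionality => w.
have := congr1 (fun f => f (h w)) gh'; rewrite /gmul /gone => <-.
by have := congr1 (fun f => f w) hg; rewrite /gmul /gone => ->.
Qed.

Lemma group_mem_inv K g h : is_group K -> K g -> gmul h g = gone -> K h.
Proof.
case=> _ _ _ Kinv Kg hg; have [h' [Kh' gh' _]] := Kinv g Kg.
by rewrite (gmul_inv_uniq hg gh').
Qed.

Lemma lcompM (x : X) g h : lcomp x (gmul g h) = gmul (lcomp x g) (lcomp x h).
Proof.
apply: functional_extensionality => -[|y w] //=; rewrite /gmul /=.
by case: eqP => [yx|ny] /=; rewrite ?eqxx //; case: eqP.
Qed.

Lemma lcomp1 (x : X) : lcomp x gone = gone.
Proof.
apply: functional_extensionality => -[|y w] //=; rewrite /gone.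
by case: (y =P x) => [->|].
Qed.

Lemma is_group_bigcap (I : Type) (Hs : I -> isoset X) : inhabited I ->
  (forall i, is_group (Hs i)) -> is_group (fun g => forall i, Hs i g).
Proof.
case=> i0 grpH; split.
- by move=> i; case: (grpH i).
- by move=> g Hg; case: (grpH i0) => _ Hisom _ _; exact: Hisom.
- by move=> g h Hg Hh i; case: (grpH i) => _ _ Hmul _; exact: Hmul.
- move=> g Hg; case: (grpH i0) => _ _ _ Hinv.
  have [h [_ gh hg]] := Hinv g (Hg i0).
  by exists h; split=> // i; exact: group_mem_inv (grpH i) (Hg i) hg.
Qed.

Lemma prelayered_bigcap G (I : Type) (Hs : I -> isoset X) : inhabited I ->
  (forall i, prelayered G (Hs i)) -> prelayered G (fun g => forall i, Hs i g).
Proof.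
case=> i0 preH; split.
- by apply: is_group_bigcap => [|i]; [exact: inhabits i0 | case: (preH i)].
- by move=> g Hg; case: (preH i0) => _ HG _; exact: HG.
- by move=> x g Hg i; case: (preH i) => _ _ Hl; exact: Hl.
Qed.

Lemma gen_min S K g : is_group K -> (forall h, S h -> K h) -> gen S g -> K g.
Proof. by move=> grpK SK; apply. Qed.

Lemma is_group_gen G S : is_group G -> (forall g, S g -> G g) -> is_group (gen S).
Proof.
move=> grpG SG; case: (grpG) => _ Gisom _ Ginv; split.
- by move=> K [].
- by move=> g /(gen_min grpG SG) /Gisom.
- move=> g h Sg Sh K grpK SK; case: (grpK) => _ _ Kmul _.
  by apply: Kmul; [exact: Sg | exact: Sh].
- move=> g Sg; have [h [_ gh hg]] := Ginv g (gen_min grpG SG Sg).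
  by exists h; split=> // K grpK SK; exact: group_mem_inv grpK (Sg K grpK SK) hg.
Qed.

Lemma is_group_lcomp_preim G K (x : X) : is_group G -> is_group K ->
  is_group (fun g => G g /\ K (lcomp x g)).
Proof.
move=> [G1 Gisom Gmul Ginv] grpK; case: (grpK) => K1 _ Kmul _; split.
- by rewrite lcomp1.
- by move=> g [/Gisom].
- move=> g h [Gg Kg] [Gh Kh].
  by split; [exact: Gmul | rewrite lcompM; exact: Kmul].
- move=> g [Gg Kg]; have [h [Gh gh hg]] := Ginv g Gg.
  exists h; split=> //; split=> //.
  by apply: group_mem_inv grpK Kg _; rewrite -lcompM hg lcomp1.
Qed.

Lemma gen_lcomp G S (x : X) g : is_group G -> (forall h, S h -> G h) ->
  (forall h, S h -> S (lcomp x h)) -> gen S g -> gen S (lcomp x g).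
Proof.
move=> grpG SG Sl Sg K grpK SK.
have grpGK : is_group (fun h => G h /\ K (lcomp x h)).
  exact: is_group_lcomp_preim.
suff: G g /\ K (lcomp x g) by case.
apply: (gen_min grpGK _ Sg).
by move=> h Sh; split; [exact: SG | exact/SK/Sl].
Qed.

Lemma prelayered_gen G S : is_group G -> (forall g, S g -> G g) ->
  (forall x g, S g -> S (lcomp x g)) -> prelayered G (gen S).
Proof.
move=> grpG SG Sl; split; first exact: is_group_gen grpG SG.
- by move=> g; exact: gen_min grpG SG.
- by move=> x g; exact: gen_lcomp grpG SG (Sl x).
Qed.

Lemma wval_mem H w f g : is_group H -> (forall i, H (f i)) -> wval w f g -> H g.
Proof.
move=> grpH Hf; case: (grpH) => H1 _ Hmul _.
elim: w g => [i||u IHu v IHv|u IHu] g /=.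
- by move->.
- by move->.
- by case=> [a [b [ua vb ->]]]; apply: Hmul; [exact: IHu | exact: IHv].
- by case=> [a [ua _ ga]]; exact: group_mem_inv grpH (IHu a ua) ga.
Qed.

Lemma wval_lcomp (x : X) w f g :
  wval w f g -> wval w (fun i => lcomp x (f i)) (lcomp x g).
Proof.
elim: w g => [i||u IHu v IHv|u IHu] g /=.
- by move->.
- by move->; rewrite lcomp1.
- case=> [a [b [ua vb ->]]]; exists (lcomp x a), (lcomp x b).
  by split; [exact: IHu | exact: IHv | exact: lcompM].
- case=> [a [ua ag ga]]; exists (lcomp x a).
  by split; [exact: IHu | rewrite -lcompM ag lcomp1 | rewrite -lcompM ga lcomp1].
Qed.

End PrelayeredLattice.

Theorem lemma3p3 (X : finType) (hX : 1 < #|X|) (G : isoset X)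
  (hG : is_group G) :
  [/\ (forall (I : Type) (Hs : I -> isoset X), inhabited I ->
         (forall i, prelayered G (Hs i)) ->
         prelayered G (fun g => forall i, Hs i g)),
      (forall H K : isoset X, prelayered G H -> prelayered G K ->
         prelayered G (gen (fun g => H g \/ K g))) &
      (forall (w : word) (H : isoset X), prelayered G H ->
         prelayered G (verbal w H))].
Proof.
split.
- by move=> I Hs; exact: prelayered_bigcap.
- move=> H K [_ HG Hl] [_ KG Kl]; apply: prelayered_gen => //.
  + by move=> g [/HG | /KG].
  + by move=> x g [/(Hl x) | /(Kl x)]; [left | right].
- move=> w H [grpH HG Hl]; apply: prelayered_gen => //.
  + by move=> g [f [Hf /(wval_mem grpH Hf)]]; exact: HG.
  + move=> x g [f [Hf wf]]; exists (fun i => lcomp x (f i)).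
    by split; [move=> i; exact: Hl | exact: wval_lcomp].
Qed.
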